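(* Let $\delta\in(0,1)$. The meta-algorithm described in the context, with the commitment subroutine \textsc{CommitUnknown} (parameter $\delta$), guarantees, with probability at least $1-\delta/3$, \[ R(\ell^\star)\le 1+20\ln T\,\ln(T/\delta). \]
   Context: Robust dynamic pricing: there are $T$ rounds and an unknown valuation $v^\star\in[0,1)$. At each round $t$ the seller posts a price $p_t\in[0,1]$. The true sale indicator is $y_t=\mathbbm 1\{p_t\le v^\star\}$; the seller observes $\sigma_t\in\{0,1\}$, which differs from $y_t$ in at most $C$ rounds. The adversary decides whether to corrupt round $t$ based on the history and on the seller's distribution over $p_t$, but not on the realized $p_t$. Meta-algorithm: let $D=\lceil\log_2 T\rceil$. Consider the complete binary tree of intervals of depth $D$ with root $[0,1)$, where each non-leaf node $[L,R)$ has children $[L,M)$ and $[M,R)$, $M=(L+R)/2$; the depth-$D$ nodes are the leaves (each of length at most $1/T$), and $\ell^\star$ is the unique leaf containing $v^\star$. The algorithm keeps a current node $I$, initially the root, and repeats until the horizon ends: if $I=[L,R)$ is not a leaf, it performs a safety check — post $L$ and observe $\sigma_L$, post $R$ and observe $\sigma_R$; the check fails if $\sigma_L=0$ or $\sigma_R=1$ (by convention the query at $L=0$ and the query at $R=1$ always count as passing). On failure $I$ becomes its parent; otherwise it posts $M$, observes $\sigma_M$, and $I$ becomes $[M,R)$ if $\sigma_M=1$ and $[L,M)$ if $\sigma_M=0$. If $I$ is a leaf, the commitment subroutine is run on $I$; if it returns FAIL, $I$ becomes its parent. \textsc{CommitUnknown} with parameter $\delta$: each leaf $\ell$ has a counter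 $s_\ell$, initialized to $0$ at the start of the horizon and never reset. On leaf $\ell=[L,R)$ it repeats the following two-round block: post $L$ and observe $\sigma_L$; if $\sigma_L=0$ return FAIL. Increase $s_\ell$ by $1$ and sample, independently of everything else, $B\sim\mathrm{Bernoulli}(\min\{4\ln(T/\delta)/s_\ell,1\})$. If $B=0$, post $L$ and observe $\sigma_L$, returning FAIL if $\sigma_L=0$; if $B=1$, post $R$ and observe $\sigma_R$, returning FAIL if $\sigma_R=1$. For a leaf $\ell$, $Q(\ell)$ is the set of rounds during which the commitment subroutine runs on $\ell$, and $R(\ell)=\sum_{t\in Q(\ell)}(v^\star-p_t\mathbbm 1\{p_t\le v^\star\})$. *)

From mathcomp Require Import all_boot all_order all_algebra.
From mathcomp Require Import all_classical all_reals all_analysis.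
Set Implicit Arguments. Unset Strict Implicit. Unset Printing Implicit Defensive.
Import Order.TTheory GRing.Theory Num.Theory.
Local Open Scope ring_scope.

(* PNav      : safety check, about to post L (non-leaf node)
   PSafeR b  : safety check, L already posted; b = "L-query passed"; about to post R
   PSafeM    : safety check passed; about to post M
   PCommit1  : CommitUnknown on a leaf, first round of a block (post L)
   PCommit2  : CommitUnknown on a leaf, second round of a block (randomized) *)
Inductive phase := PNav | PSafeR of bool | PSafeM | PCommit1 | PCommit2.

(* State of the whole interaction.  A node at depth d with index k (k < 2^d)
   is the dyadic interval [k/2^d, (k+1)/2^d). *)
Record pstate (R : Type) := PState {
  nd_d : nat;
  nd_k : nat;
  ph   : phase;
  cnt  : nat -> nat;        (* counters s_l of the leaves, indexed by leaf index; never reset *)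
  hist : seq (R * bool);    (* public history: posted prices and observed signals *)
  used : nat;               (* number of corrupted rounds so far *)
  reg  : R                  (* accumulated regret R on the leaf l-star so far *)
}.

Section Pricing.
Variable R : realType.
Variables (T C : nat) (delta vstar : R).
(* adversary: given the history and the seller's distribution over p_t
   (list of (price, probability)), decides whether to corrupt round t *)
Variable adv : seq (R * bool) -> seq (R * R) -> bool.

Definition Dep : nat := up_log 2 T.

Definition lo (d k : nat) : R := k%:R / 2 ^+ d.
Definition hi (d k : nat) : R := k.+1%:R / 2 ^+ d.
Definition mid (d k : nat) : R := (k.*2.+1)%:R / 2 ^+ d.+1.

Definition is_star_leaf (d k : nat) : bool :=
  (d == Dep) && (lo d k <= vstar) && (vstar < hi d k).

Definition goto (s : pstate R) (d k : nat) : pstate R :=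
  PState d k (if (d < Dep)%N then PNav else PCommit1) (cnt s) (hist s) (used s) (reg s).

Definition goto_parent (s : pstate R) : pstate R := goto s (nd_d s).-1 (nd_k s)./2.

Definition set_phase (s : pstate R) (p : phase) : pstate R :=
  PState (nd_d s) (nd_k s) p (cnt s) (hist s) (used s) (reg s).

(* Bernoulli parameter of CommitUnknown for counter value n *)
Definition qprob (n : nat) : R := Num.min (4 * ln (T%:R / delta) / n%:R) 1.

(* seller's distribution over the price of the current round:
   list of (price, probability, branch tag); tag = B for CommitUnknown *)
Definition dist_of (s : pstate R) : seq (R * R * bool) :=
  let d := nd_d s in let k := nd_k s in
  match ph s with
  | PNav => [:: (lo d k, 1, false)]
  | PSafeR _ => [:: (hi d k, 1, false)]
  | PSafeM => [:: (mid d k, 1, false)]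
  | PCommit1 => [:: (lo d k, 1, false)]
  | PCommit2 => let q := qprob (cnt s k) in [:: (lo d k, 1 - q, false); (hi d k, q, true)]
  end.

Definition trans (s : pstate R) (tag sig : bool) : pstate R :=
  let d := nd_d s in let k := nd_k s in
  match ph s with
  | PNav => set_phase s (PSafeR (sig || (k == 0)%N))       (* L = 0 counts as passing *)
  | PSafeR okL =>
      if okL && (~~ sig || (k.+1 == 2 ^ d)%N)              (* R = 1 counts as passing *)
      then set_phase s PSafeM else goto_parent s
  | PSafeM => if sig then goto s d.+1 k.*2.+1 else goto s d.+1 k.*2
  | PCommit1 =>
      if sig then
        PState d k PCommit2 (fun j => if j == k then (cnt s j).+1 else cnt s j)
               (hist s) (used s) (reg s)
      else goto_parent s
  | PCommit2 => if (if tag then sig else ~~ sig) then goto_parent s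
                else set_phase s PCommit1
  end.

Definition in_commit (p : phase) : bool :=
  match p with PCommit1 | PCommit2 => true | _ => false end.

Definition round (s : pstate R) (p : R) (tag c : bool) : pstate R :=
  let y := p <= vstar in
  let sig := addb y c in
  let r := if in_commit (ph s) && is_star_leaf (nd_d s) (nd_k s)
           then vstar - (if y then p else 0) else 0 in
  trans (PState (nd_d s) (nd_k s) (ph s) (cnt s)
                (rcons (hist s) (p, sig)) (used s + c) (reg s + r)) tag sig.

Definition bound : R := 1 + 20 * ln T%:R * ln (T%:R / delta).

(* probability, over the seller's coins, that after n more rounds from state s
   the accumulated regret on l-star is at most [bound]. The adversary decides corruption
   from the history and the distribution of p_t (not its realization), and is
   cut off once C rounds are corrupted. *)
Fixpoint prob_good (n : nat) (s : pstate R) : R :=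
  match n with
  | 0 => if reg s <= bound then 1 else 0
  | n'.+1 =>
      let dist := dist_of s in
      let c := adv (hist s) [seq (x.1.1, x.1.2) | x <- dist] && (used s < C)%N in
      \sum_(x <- dist) x.1.2 * prob_good n' (round s x.1.1 x.2 c)
  end.

Definition init_state : pstate R :=
  goto (PState 0 0 PNav (fun _ => 0%N) [::] 0%N 0) 0 0.

End Pricing.

From mathcomp Require Import all_boot all_order all_algebra.
From mathcomp Require Import all_classical all_reals all_analysis.
From mathcomp Require Import ring lra.
Set Implicit Arguments. Unset Strict Implicit. Unset Printing Implicit Defensive.
Import Order.TTheory GRing.Theory Num.Theory.
Local Open Scope ring_scope.

(* Only the rounds spent in CommitUnknown on the star leaf contribute to its
   regret. Posting [L] there costs at most the leaf width [2^-D <= 1/T];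
   posting [R] costs at most 1 but happens with probability [q = qprob s],
   where [s] is the current counter of the leaf. Hence, with [n] rounds left,
     expR ((regret + n 2^-D - bound) / 2) * prod_(i < n) (1 + q (s + i + 1))
   is a supermartingale whatever the adversary does, and it bounds the
   probability that the final regret exceeds [bound]. At the start this
   potential is at most
     expR ((1 - bound) / 2 + 4 ln (T/delta) (1 + ln T)) <= delta / 3
   by the harmonic bound on the sum of the [q]'s, provided [ln T >= 1]. For
   [T <= 3] the regret is deterministically at most [T <= bound]. *)

Section RealInequalities.
Variable R : realType.

Lemma ln_ge1B_inv (x : R) : 0 < x -> 1 - x^-1 <= ln x.
Proof.
move=> x_gt0; have /le_ln1Dx : -1 < x^-1 - 1 by move: x_gt0; rewrite -invr_gt0; lra.
by rewrite addrC subrK lnV ?posrE //; lra.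
Qed.

Lemma half_le_ln2 : 1 / 2 <= ln (2 : R).
Proof. by have := @ln_ge1B_inv 2 (ltr0Sn _ 1); lra. Qed.

Lemma expR_half_le2 : expR (1 / 2) <= 2 :> R.
Proof. by rewrite -[leRHS]lnK ?posrE // ler_expR half_le_ln2. Qed.

Lemma sum_harmonic_le_1Dln m : (0 < m)%N ->
  \sum_(0 <= i < m) harmonic i <= 1 + ln m%:R :> R.
Proof.
case: m => // m _; elim: m => [|m IH]; first by rewrite big_nat1 /= invr1 ln1 addr0.
rewrite big_nat_recr //=.
have : 1 - (m.+2%:R / m.+1%:R)^-1 <= ln (m.+2%:R / m.+1%:R) :> R.
  by apply: ln_ge1B_inv; rewrite divr_gt0.
rewrite ln_div ?posrE // invf_div.
have -> : 1 - m.+1%:R / m.+2%:R = m.+2%:R^-1 :> R.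
  by rewrite -!natr1; field; rewrite !natr1 pnatr_eq0.
move: IH => /=; move: (\sum_(0 <= i < m.+1) _) (m.+2%:R^-1 : R) => S h; lra.
Qed.

Lemma prod_1D_le_expR_sum I (r : seq I) (P : pred I) (F : I -> R) :
  (forall i, P i -> 0 <= F i) ->
  \prod_(i <- r | P i) (1 + F i) <= expR (\sum_(i <- r | P i) F i).
Proof.
move=> F_ge0; rewrite expR_sum; apply: ler_prod => i Pi.
by rewrite addr_ge0 ?F_ge0 ?expR_ge1Dx.
Qed.

End RealInequalities.

Lemma hiB_lo (R : realType) d k : hi R d k - lo R d k = (2 ^+ d)^-1.
Proof. by rewrite /hi /lo -mulrBl -natrB // subSnn mul1r. Qed.

Section StarLeaf.
Variables (R : realType) (T : nat) (vstar : R).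

Lemma is_star_leafP d k : is_star_leaf T vstar d k ->
  [/\ d = Dep T, lo R d k <= vstar & vstar < hi R d k].
Proof. by case/andP => /andP[/eqP]. Qed.

Lemma is_star_leaf_inj d k k' :
  is_star_leaf T vstar d k -> is_star_leaf T vstar d k' -> k = k'.
Proof.
move=> /is_star_leafP[_ lo_k hi_k] /is_star_leafP[_ lo_k' hi_k'].
have /ltr_pM2r lt_div : 0 < (2 ^+ d : R)^-1 by rewrite invr_gt0 exprn_gt0.
have := le_lt_trans lo_k hi_k'; have := le_lt_trans lo_k' hi_k.
rewrite /lo /hi !lt_div !ltr_nat !ltnS => le_k'k le_kk'.
by apply/eqP; rewrite eqn_leq le_kk' le_k'k.
Qed.

Lemma exists_star_index :
  exists kstar, forall d k, is_star_leaf T vstar d k -> k = kstar.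
Proof.
have [[k0 star_k0] | no_star] := pselect (exists k, is_star_leaf T vstar (Dep T) k).
  exists k0 => d k star_k; have [d_eq _ _] := is_star_leafP star_k.
  by rewrite d_eq in star_k; exact: is_star_leaf_inj star_k star_k0.
exists 0%N => d k star_k; exfalso; apply: no_star; exists k.
by have [<- _ _] := is_star_leafP star_k.
Qed.

End StarLeaf.

Section RegretOnStarLeaf.
Variable R : realType.
Variables (T C : nat) (delta vstar : R).
Variable adv : seq (R * bool) -> seq (R * R) -> bool.
Hypothesis T_gt0 : (0 < T)%N.
Hypothesis delta01 : 0 < delta < 1.
Hypothesis vstar01 : 0 <= vstar < 1.

Local Notation prob_good := (prob_good T C delta vstar adv).
Local Notation round := (round T vstar).
Local Notation dist_of := (dist_of T delta).
Local Notation qprob := (qprob T delta).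
Local Notation is_star_leaf := (is_star_leaf T vstar).
Local Notation bound := (bound T delta).

Lemma ln_T_div_delta_ge0 : 0 <= ln (T%:R / delta).
Proof.
have /andP[delta_gt0 delta_lt1] := delta01.
apply: ln_ge0; rewrite ler_pdivlMr // mul1r.
by apply: le_trans (ltW delta_lt1) _; rewrite ler1n.
Qed.

Lemma qprob_ge0 n : 0 <= qprob n.
Proof. by rewrite /qprob le_min ler01 andbT divr_ge0 ?mulr_ge0 ?ln_T_div_delta_ge0. Qed.

Lemma qprob_le1 n : qprob n <= 1.
Proof. by rewrite /qprob ge_min lexx orbT. Qed.

Lemma dist_of_weight_ge0 s x : x \in dist_of s -> 0 <= x.1.2.
Proof.
rewrite /dist_of; case: (ph s) => [|?|||]; rewrite ?inE; try by move=> /eqP->.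
by case/orP => /eqP-> /=; rewrite ?subr_ge0 ?qprob_le1 ?qprob_ge0.
Qed.

Lemma dist_of_weight_sum s : \sum_(x <- dist_of s) x.1.2 = 1.
Proof.
by rewrite /dist_of; case: (ph s) => [|?|||]; rewrite !big_cons big_nil /= ?addr0 ?subrK.
Qed.

Lemma dist_of_price_ge0 s x : x \in dist_of s -> 0 <= x.1.1.
Proof.
have ge0 n d : 0 <= n%:R / 2 ^+ d :> R by rewrite divr_ge0 ?exprn_ge0.
rewrite /dist_of; case: (ph s) => [|?|||]; rewrite ?inE; try by move=> /eqP->; apply: ge0.
by case/orP => /eqP->; apply: ge0.
Qed.

Lemma prob_good_supermartingale (M : nat -> pstate R -> R) :
  (forall n s, 0 <= M n s) ->
  (forall s, bound < reg s -> 1 <= M 0%N s) ->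
  (forall n s c, \sum_(x <- dist_of s) x.1.2 * M n (round s x.1.1 x.2 c) <= M n.+1 s) ->
  forall n s, 1 - M n s <= prob_good n s.
Proof.
move=> M_ge0 M_bad M_step; elim=> [|n IH] s /=.
  case: (leP (reg s) bound) => [_|/M_bad]; first by rewrite lerBlDr lerDl.
  by rewrite subr_le0.
set c := (adv _ _ && _).
apply: le_trans (lerB (lexx 1) (M_step n s c)) _.
rewrite -[in leLHS](dist_of_weight_sum s) -sumrB !big_seq.
apply: ler_sum => x x_in.
by rewrite -[X in X - _]mulr1 -mulrBr ler_wpM2l ?IH ?(dist_of_weight_ge0 x_in).
Qed.

Lemma reg_round s p tag c : reg (round s p tag c) = reg s +
  (if in_commit (ph s) && is_star_leaf (nd_d s) (nd_k s)
   then vstar - (if p <= vstar then p else 0) else 0).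
Proof.
by rewrite /round /trans; case: (ph s) => [|?|||] /=; repeat case: ifP.
Qed.

Lemma reg_round_le1 s p tag c : 0 <= p -> reg (round s p tag c) <= reg s + 1.
Proof.
move=> p_ge0; rewrite reg_round lerD2l; have /andP[] := vstar01.
by case: ifP => _; [case: ifP => _ |]; lra.
Qed.

Lemma prob_good_sure n s : reg s + n%:R <= bound -> prob_good n s = 1.
Proof.
elim: n s => [|n IH] s /=; first by rewrite addr0 => ->.
move=> reg_ok; rewrite -[RHS](dist_of_weight_sum s) !big_seq.
apply: eq_bigr => x x_in; rewrite IH ?mulr1 //.
apply: le_trans reg_ok; rewrite -natr1 (addrC n%:R) addrA lerD2r.
exact: reg_round_le1 (dist_of_price_ge0 x_in).
Qed.

Lemma ln_T_le_ln_T_div_delta : ln T%:R <= ln (T%:R / delta).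
Proof.
have /andP[delta_gt0 delta_lt1] := delta01.
by rewrite ler_ln ?posrE ?divr_gt0 ?ltr0n // ler_pdivlMr // ler_piMr // ltW.
Qed.

Lemma T_le_bound : (T <= 3)%N -> T%:R <= bound.
Proof.
move=> T_le3; rewrite /bound.
have L_ge := ln_T_le_ln_T_div_delta.
have T_le3' : T%:R <= 3 :> R by rewrite (ler_nat R T 3).
have [T_eq1 | T_gt1] := eqVneq T 1%N; first by rewrite T_eq1 ln1 mulr0 mul0r addr0.
have : ln 2 <= ln T%:R :> R.
  by rewrite ler_ln ?posrE ?ltr0n // (ler_nat R 2 T) ltn_neqAle eq_sym T_gt1 T_gt0.
have := half_le_ln2 R; nra.
Qed.

Definition leaf_width : R := (2 ^+ Dep T)^-1.

Lemma leaf_width_ge0 : 0 <= leaf_width.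
Proof. by rewrite invr_ge0 exprn_ge0. Qed.

Lemma T_mul_leaf_width_le1 : T%:R * leaf_width <= 1.
Proof.
rewrite ler_pdivrMr ?exprn_gt0 // mul1r -natrX ler_nat.
exact: up_logP.
Qed.

Lemma star_leaf_lo_regret d k : is_star_leaf d k -> vstar - lo R d k <= leaf_width.
Proof.
by case/is_star_leafP => -> lo_le hi_gt; have := hiB_lo R (Dep T) k; rewrite /leaf_width; lra.
Qed.

(* While the randomized second round of a block on the star leaf is pending,
   the factor [1 + q] drawn from [bonus_prod] at the counter increment is held
   here: it pays for the chance [q] of posting [R] at cost up to 1. *)
Definition commit_bonus (s : pstate R) : R :=
  match ph s with
  | PCommit2 => if is_star_leaf (nd_d s) (nd_k s) then 1 + qprob (cnt s (nd_k s)) else 1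
  | _ => 1
  end.

(* One factor for each counter value [c + 1, ..., c + m] that the next [m]
   rounds can reach. *)
Definition bonus_prod (c m : nat) : R := \prod_(0 <= i < m) (1 + qprob (c + i).+1).

Lemma commit_bonus_ge1 s : 1 <= commit_bonus s.
Proof. by rewrite /commit_bonus; case: (ph s) => //; case: ifP; rewrite ?lerDl ?qprob_ge0. Qed.

Lemma bonus_prod_ge1 c m : 1 <= bonus_prod c m.
Proof.
apply: (big_ind (fun x => 1 <= x)) => //; first exact: mulr_ege1.
by move=> i _; rewrite lerDl qprob_ge0.
Qed.

Lemma bonus_prodS c m : bonus_prod c m.+1 = (1 + qprob c.+1) * bonus_prod c.+1 m.
Proof.
rewrite /bonus_prod big_nat_recl // addn0; congr (_ * _).
by apply: eq_bigr => i _; rewrite addnS addSn.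
Qed.

Lemma bonus_prod_leS c m : bonus_prod c m <= bonus_prod c m.+1.
Proof.
rewrite /bonus_prod big_nat_recr //= ler_peMr ?lerDl ?qprob_ge0 //.
exact: le_trans (bonus_prod_ge1 c m).
Qed.

Lemma bonus_prod_shift c m : bonus_prod c.+1 m <= bonus_prod c m.+1.
Proof.
rewrite bonus_prodS ler_peMl ?lerDl ?qprob_ge0 //.
exact: le_trans (bonus_prod_ge1 _ m).
Qed.

Lemma commit_bonus_goto (s : pstate R) d k : commit_bonus (goto T s d k) = 1.
Proof. by rewrite /commit_bonus /goto /=; case: ifP. Qed.

Lemma commit_bonus_round s p tag c :
  ph s <> PCommit1 -> commit_bonus (round s p tag c) = 1.
Proof.
rewrite /round /trans; case: (ph s) => [|?|||] //= _;
  by repeat case: ifP => _; rewrite ?commit_bonus_goto.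
Qed.

Lemma cnt_round s p tag c : ph s <> PCommit1 -> cnt (round s p tag c) = cnt s.
Proof. by rewrite /round /trans; case: (ph s) => [|?|||] //= _; repeat case: ifP. Qed.

Lemma bonus_prod0_le_expR :
  bonus_prod 0 T <= expR (4 * ln (T%:R / delta) * (1 + ln T%:R)).
Proof.
apply: le_trans; first by apply: prod_1D_le_expR_sum => i _; exact: qprob_ge0.
rewrite ler_expR.
apply: le_trans (_ : \sum_(0 <= i < T) 4 * ln (T%:R / delta) * harmonic i <= _).
  by apply: ler_sum => i _; rewrite add0n /qprob ge_min /= lexx.
by rewrite -mulr_sumr ler_wpM2l ?sum_harmonic_le_1Dln ?mulr_ge0 ?ln_T_div_delta_ge0.
Qed.

Lemma init_exponent_le : (4 <= T)%N ->
  (1 - bound) / 2 + 4 * ln (T%:R / delta) * (1 + ln T%:R) <= ln (delta / 3).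
Proof.
move=> T_ge4; have /andP[delta_gt0 delta_lt1] := delta01.
have ln_T_ge1 : 1 <= ln T%:R :> R.
  have : ln 4 <= ln T%:R :> R by rewrite ler_ln ?posrE ?ltr0n // (ler_nat R 4 T).
  have -> : ln 4 = ln 2 + ln 2 :> R by rewrite -lnM ?posrE //; congr ln; lra.
  by have := half_le_ln2 R; lra.
have ln3_le : ln 3 <= ln T%:R :> R.
  by rewrite ler_ln ?posrE ?ltr0n // (ler_nat R 3 T) ltnW.
have ln_T_div : ln (T%:R / delta) = ln T%:R - ln delta by rewrite ln_div ?posrE ?ltr0n.
have ln_delta_div3 : ln (delta / 3) = ln delta - ln 3 by rewrite ln_div ?posrE.
have := ln_T_le_ln_T_div_delta; rewrite /bound ln_T_div ln_delta_div3.
move: (ln T%:R) (ln delta) (ln 3) ln_T_ge1 ln3_le => x l l3 *; nra.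
Qed.

Section ExpPotential.
Variable kstar : nat.
Hypothesis kstar_spec : forall d k, is_star_leaf d k -> k = kstar.

(* The exponent is halved so that a round of cost at most 1 multiplies the
   potential by at most [expR (1/2) <= 2], which [commit_bonus] covers. *)
Definition exp_potential (n : nat) (s : pstate R) : R :=
  expR ((reg s + n%:R * leaf_width - bound) / 2) *
  (commit_bonus s * bonus_prod (cnt s kstar) n).

Lemma exp_potential_ge0 n s : 0 <= exp_potential n s.
Proof.
rewrite mulr_ge0 ?expR_ge0 // mulr_ge0 //.
  exact: le_trans (commit_bonus_ge1 s).
exact: le_trans (bonus_prod_ge1 _ _).
Qed.

Lemma exp_potential_le_succ n s s' :
  reg s' <= reg s + leaf_width ->
  commit_bonus s' * bonus_prod (cnt s' kstar) n <=
    commit_bonus s * bonus_prod (cnt s kstar) n.+1 ->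
  exp_potential n s' <= exp_potential n.+1 s.
Proof.
move=> reg_le bonus_le; rewrite ler_pM ?expR_ge0 //.
  by rewrite mulr_ge0 // (le_trans ler01) ?commit_bonus_ge1 ?bonus_prod_ge1.
by rewrite ler_expR ler_pM2r // -natr1; have := leaf_width_ge0; lra.
Qed.

Lemma exp_potential_nav_step n s p tag c : ~~ in_commit (ph s) ->
  exp_potential n (round s p tag c) <= exp_potential n.+1 s.
Proof.
move=> nav; have not_commit1 : ph s <> PCommit1 by move=> ph_s; rewrite ph_s in nav.
apply: exp_potential_le_succ.
  by rewrite reg_round (negbTE nav) addr0 lerDl leaf_width_ge0.
have -> : commit_bonus s = 1 by rewrite /commit_bonus; case: (ph s) nav.
by rewrite commit_bonus_round // cnt_round // !mul1r bonus_prod_leS.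
Qed.

Lemma exp_potential_commit1_step n s c : ph s = PCommit1 ->
  exp_potential n (round s (lo R (nd_d s) (nd_k s)) false c) <= exp_potential n.+1 s.
Proof.
case: s => d k _ cn h u rg /= ->; apply: exp_potential_le_succ.
  rewrite reg_round /=; case: ifP => [star|_]; last first.
    by rewrite addr0 lerDl leaf_width_ge0.
  have [_ lo_le _] := is_star_leafP star.
  by rewrite lo_le lerD2l star_leaf_lo_regret.
rewrite /round /trans /=; case: ifP => _; last first.
  by rewrite commit_bonus_goto /commit_bonus !mul1r bonus_prod_leS.
rewrite /commit_bonus /= mul1r; case: ifP => [/kstar_spec ->|_].
  by rewrite eqxx bonus_prodS.
by case: eqP => [->|_]; rewrite mul1r ?bonus_prod_shift ?bonus_prod_leS.
Qed.

Lemma exp_potential_commit2_step n s c : ph s = PCommit2 ->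
  (1 - qprob (cnt s (nd_k s))) *
    exp_potential n (round s (lo R (nd_d s) (nd_k s)) false c) +
  qprob (cnt s (nd_k s)) *
    exp_potential n (round s (hi R (nd_d s) (nd_k s)) true c)
  <= exp_potential n.+1 s.
Proof.
case: s => d k _ cn h u rg /= ->.
set s := PState d k PCommit2 cn h u rg.
set X := expR ((rg + n.+1%:R * leaf_width - bound) / 2).
set G := bonus_prod (cn kstar) n.
have X_ge0 : 0 <= X := expR_ge0 _.
have G_ge0 : 0 <= G := le_trans ler01 (bonus_prod_ge1 _ _).
have XG_le : X * G <= X * bonus_prod (cn kstar) n.+1 by rewrite ler_wpM2l ?bonus_prod_leS.
have potential_round p tag : exp_potential n (round s p tag c) =
    expR ((reg (round s p tag c) + n%:R * leaf_width - bound) / 2) * G.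
  by rewrite /exp_potential commit_bonus_round // cnt_round // mul1r.
have width_ge0 := leaf_width_ge0.
have lo_le : exp_potential n (round s (lo R d k) false c) <= X * G.
  rewrite potential_round ler_wpM2r // ler_expR ler_pM2r // reg_round /=.
  rewrite -[n.+1%:R]natr1 mulrDl mul1r.
  case: ifP => [star|_]; last lra.
  have [_ lo_le _] := is_star_leafP star; rewrite lo_le.
  have := star_leaf_lo_regret star; lra.
have hi_le : exp_potential n (round s (hi R d k) true c) <=
    (if is_star_leaf d k then 2 else 1) * X * G.
  rewrite potential_round ler_wpM2r // reg_round /=.
  case: ifP => [star|_]; last first.
    by rewrite mul1r addr0 ler_expR ler_pM2r // -[n.+1%:R]natr1 mulrDl mul1r; lra.
  have [_ _ hi_gt] := is_star_leafP star; rewrite (lt_geF hi_gt) subr0.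
  apply: le_trans (_ : expR ((rg + n.+1%:R * leaf_width - bound) / 2 + 1 / 2) <= _).
    by rewrite ler_expR -[n.+1%:R]natr1 mulrDl mul1r; have /andP[] := vstar01; lra.
  by rewrite expRD mulrC ler_wpM2r ?expR_half_le2.
have q_ge0 := qprob_ge0 (cn k); have q_le1 := qprob_le1 (cn k).
rewrite /exp_potential /commit_bonus /= -/X -/G.
apply: le_trans (lerD (ler_wpM2l _ lo_le) (ler_wpM2l q_ge0 hi_le)) _.
  by rewrite subr_ge0.
have qXG_le := ler_wpM2l q_ge0 XG_le.
by case: ifP => _; nra.
Qed.

Lemma exp_potential_step n s c :
  \sum_(x <- dist_of s) x.1.2 * exp_potential n (round s x.1.1 x.2 c)
  <= exp_potential n.+1 s.
Proof.
rewrite /dist_of; case ph_s: (ph s) => [|?|||];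
  rewrite ?big_cons big_nil ?addr0 ?mul1r /=.
1-3: by apply: exp_potential_nav_step; rewrite ph_s.
- exact: exp_potential_commit1_step.
- exact: exp_potential_commit2_step.
Qed.

Lemma exp_potential_bound n s : 1 - exp_potential n s <= prob_good n s.
Proof.
apply: prob_good_supermartingale; [exact: exp_potential_ge0 | | exact: exp_potential_step].
move=> s0 bad; rewrite /exp_potential /bonus_prod big_geq // mulr1 mul0r addr0.
rewrite -[1]mulr1 ler_pM ?commit_bonus_ge1 //.
by rewrite -expR0 ler_expR divr_ge0 // subr_ge0 ltW.
Qed.

Lemma exp_potential_init_le :
  (4 <= T)%N -> exp_potential T (init_state R T) <= delta / 3.
Proof.
move=> T_ge4; have /andP[delta_gt0 _] := delta01.
rewrite /exp_potential commit_bonus_goto mul1r /= add0r -[leRHS]lnK ?posrE ?divr_gt0 //.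
have reg_le : expR ((T%:R * leaf_width - bound) / 2) <= expR ((1 - bound) / 2).
  by rewrite ler_expR ler_pM2r // lerD2r T_mul_leaf_width_le1.
apply: le_trans (ler_pM (expR_ge0 _) (le_trans ler01 (bonus_prod_ge1 _ _)) reg_le bonus_prod0_le_expR) _.
by rewrite -expRD ler_expR init_exponent_le.
Qed.

End ExpPotential.

End RegretOnStarLeaf.

Theorem lemma5p2 (R : realType) (T C : nat) (delta vstar : R)
    (adv : seq (R * bool) -> seq (R * R) -> bool) :
  (0 < T)%N -> 0 < delta < 1 -> 0 <= vstar < 1 ->
  1 - delta / 3 <= prob_good T C delta vstar adv T (init_state R T).
Proof.
move=> T_gt0 delta01 vstar01; have /andP[delta_gt0 _] := delta01.
have [T_le3 | T_ge4] := leqP T 3.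
  rewrite (prob_good_sure C adv vstar01) /= ?add0r ?T_le_bound //.
  by rewrite lerBlDr lerDl divr_ge0 // ltW.
have [kstar kstar_spec] := exists_star_index T vstar.
have := exp_potential_init_le vstar T_gt0 delta01 kstar T_ge4.
have := exp_potential_bound C adv T_gt0 delta01 vstar01 kstar_spec T (init_state R T).
lra.
Qed.
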